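(* In the multi-parameter setting described in the context, $H(\theta)\le C_\Upsilon(\theta)$ as $m\times m$ real symmetric matrices, i.e. $v^TH(\theta)v\le v^TC_\Upsilon(\theta)v$ for all $v\in\mathbb{R}^m$.
   Context: A multi-parameter quantum channel on density matrices on $\mathbb{C}^d$ is $\rho_0\mapsto\sum_kE_k(\theta)\rho_0E_k(\theta)^\dagger$ with $\theta=(\theta^1,\dots,\theta^m)\in\mathbb{R}^m$, Kraus operators differentiable in $\theta$, $\sum_kE_k^\dagger E_k=I$. The input is a fixed pure state $\rho_0=|\psi_0\rangle\langle\psi_0|$. Canonical Kraus operators $\{\Upsilon_k(\theta)\}_{k=1}^d$: a differentiable Kraus representation of the same channel with $\mathrm{tr}\{\Upsilon_k\rho_0\Upsilon_j^\dagger\}=\delta_{jk}p_k(\theta)$; the output is $\rho_{out}(\theta)=\sum_kp_k(\theta)|w_k(\theta)\rangle\langle w_k(\theta)|$ with $\{|w_k(\theta)\rangle\}$ an orthonormal basis differentiable in $\theta$ and $|w_k\rangle=p_k^{-1/2}\Upsilon_k|\psi_0\rangle$ when $p_k>0$. Write $X^{(j)}=\partial X/\partial\theta^j$. The multi-parameter SM bound is the matrix $C_\Upsilon(\theta)_{jk}=4\sum_l\mathrm{Re}\,\mathrm{tr}\{\Upsilon_l^{(j)}\rho_0\Upsilon_l^{(k)\dagger}\}$. The SLD quantum information matrix is $H(\theta)_{jk}=\mathrm{Re}\,\mathrm{tr}\{\lambda^{(j)}\rho_{out}\lambda^{(k)}\}$, where $\lambda^{(j)}$ is a self-adjoint solution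 of $\partial\rho_{out}/\partial\theta^j=\frac12(\rho_{out}\lambda^{(j)}+\lambda^{(j)}\rho_{out})$. *)

From HB Require Import structures.
From mathcomp Require Import all_boot all_order all_algebra.
From mathcomp Require Import all_classical all_reals.
From mathcomp Require Import topology normedtype derive.
From mathcomp Require Import complex.
Set Implicit Arguments. Unset Strict Implicit. Unset Printing Implicit Defensive.
Import Order.TTheory GRing.Theory Num.Theory.
Import numFieldNormedType.Exports.
Local Open Scope ring_scope.

Notation CM R d := 'M[(R[i])%type]_d.
Notation CV R d := 'cV[(R[i])%type]_d.

Definition adj (R : realType) (p q : nat) (A : 'M[R[i]]_(p, q)) : 'M[R[i]]_(q, p) :=
  map_mx (@conjc R) A^T.

Definition selfadj (R : realType) (d : nat) (A : CM R d) : Prop := adj A = A.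

Definition reF (R : realType) (m p q : nat) (F : 'rV[R]_m -> 'M[R[i]]_(p, q))
  (a : 'I_p) (b : 'I_q) : 'rV[R]_m -> R := fun t => complex.Re (F t a b).
Definition imF (R : realType) (m p q : nat) (F : 'rV[R]_m -> 'M[R[i]]_(p, q))
  (a : 'I_p) (b : 'I_q) : 'rV[R]_m -> R := fun t => complex.Im (F t a b).

(* F : R^m -> C^{p x q} is (Frechet) differentiable everywhere
   (as a map R^m -> R^{2pq}, i.e. entrywise in real and imaginary parts) *)
Definition mx_differentiable (R : realType) (m p q : nat)
  (F : 'rV[R]_m -> 'M[R[i]]_(p, q)) : Prop :=
  forall t a b, differentiable (reF F a b) t /\ differentiable (imF F a b) t.

Definition evec (R : realType) (m : nat) (j : 'I_m) : 'rV[R]_m := delta_mx 0 j.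

Definition pderiv (R : realType) (m p q : nat) (F : 'rV[R]_m -> 'M[R[i]]_(p, q))
  (j : 'I_m) (t : 'rV[R]_m) : 'M[R[i]]_(p, q) :=
  \matrix_(a, b) Complex ('D_(evec R j) (reF F a b) t) ('D_(evec R j) (imF F a b) t).

Definition pure_st (R : realType) (d : nat) (psi : CV R d) : CM R d := psi *m adj psi.

Definition chan_out (R : realType) (m d r : nat) (Y : 'I_r -> 'rV[R]_m -> CM R d)
  (rho0 : CM R d) (t : 'rV[R]_m) : CM R d :=
  \sum_(k < r) (Y k t *m rho0 *m adj (Y k t)).

Definition SMbound (R : realType) (m d : nat) (Y : 'I_d -> 'rV[R]_m -> CM R d)
  (rho0 : CM R d) (t : 'rV[R]_m) (j k : 'I_m) : R :=
  4 * \sum_(l < d) complex.Re (\tr (pderiv (Y l) j t *m rho0 *m adj (pderiv (Y l) k t))).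

Definition SLDinfo (R : realType) (m d : nat) (lam : 'I_m -> CM R d) (rho : CM R d)
  (j k : 'I_m) : R :=
  complex.Re (\tr (lam j *m rho *m lam k)).

Definition qform (R : realType) (m : nat) (M : 'I_m -> 'I_m -> R) (v : 'rV[R]_m) : R :=
  \sum_(j < m) \sum_(k < m) v 0 j * M j k * v 0 k.

(* Fix v and put Lam := sum_j v_j lam_j and Z_l := sum_j v_j dUpsilon_l/dtheta^j.  Then
   v^T H v = Re tr(Lam rho Lam) and v^T C v = 4 sum_l Re tr(Z_l rho0 Z_l^dagger), while
   differentiating rho = sum_l Upsilon_l rho0 Upsilon_l^dagger along v turns the SLD equations
   into sum_l (Z_l rho0 Upsilon_l^dagger + Upsilon_l rho0 Z_l^dagger) = (rho Lam + Lam rho)/2.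
   Expanding 0 <= sum_l tr((Lam Upsilon_l - 2 Z_l) rho0 (Lam Upsilon_l - 2 Z_l)^dagger), the
   cross terms equal -2 tr(Lam rho Lam) by the SLD equation, which leaves exactly
   0 <= 4 sum_l tr(Z_l rho0 Z_l^dagger) - tr(Lam rho Lam). *)

From HB Require Import structures.
From mathcomp Require Import all_boot all_order all_algebra.
From mathcomp Require Import all_classical all_reals.
From mathcomp Require Import topology normedtype derive.
From mathcomp Require Import complex ring.
Set Implicit Arguments. Unset Strict Implicit. Unset Printing Implicit Defensive.
Import Order.TTheory GRing.Theory Num.Theory.
Import numFieldNormedType.Exports.
Local Open Scope ring_scope.
Local Open Scope complex_scope.

Section ComplexParts.
Variable R : realType.

Lemma Re_sum I (r : seq I) (P : pred I) (F : I -> R[i]) :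
  complex.Re (\sum_(k <- r | P k) F k) = \sum_(k <- r | P k) complex.Re (F k).
Proof. exact: (@raddf_sum _ _ (@complex.Re R : Rcomplex R -> R)). Qed.

Lemma Im_sum I (r : seq I) (P : pred I) (F : I -> R[i]) :
  complex.Im (\sum_(k <- r | P k) F k) = \sum_(k <- r | P k) complex.Im (F k).
Proof. exact: (@raddf_sum _ _ (@complex.Im R : Rcomplex R -> R)). Qed.

Lemma Re_realM (x : R) (z : R[i]) : complex.Re (x%:C * z) = x * complex.Re z.
Proof. by case: z => a b /=; rewrite mul0r subr0. Qed.

Lemma Re_realMM (x y : R) (z : R[i]) : complex.Re (x%:C * z * y%:C) = x * complex.Re z * y.
Proof. by case: z => a b /=; ring. Qed.

End ComplexParts.

Section ComplexDerive.
Variables (R : realType) (m : nat) (t v : 'rV[R]_m).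
Implicit Types (F G : 'rV[R]_m -> R[i]) (dF dG : R[i]).

Definition is_cderive F dF : Prop :=
  is_derive t v (fun s => complex.Re (F s)) (complex.Re dF) /\
  is_derive t v (fun s => complex.Im (F s)) (complex.Im dF).

Lemma is_cderive_cst (c : R[i]) : is_cderive (fun=> c) 0.
Proof. by split; apply: is_derive_cst. Qed.

Lemma is_cderive_sum n (F : 'I_n -> 'rV[R]_m -> R[i]) (dF : 'I_n -> R[i]) :
  (forall k, is_cderive (F k) (dF k)) ->
  is_cderive (fun s => \sum_(k < n) F k s) (\sum_(k < n) dF k).
Proof.
move=> HF; rewrite /is_cderive Re_sum Im_sum.
have -> : (fun s => complex.Re (\sum_(k < n) F k s)) =
          \sum_(k < n) (fun s => complex.Re (F k s)).
  by rewrite fct_sumE; apply/funext => s; rewrite Re_sum.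
have -> : (fun s => complex.Im (\sum_(k < n) F k s)) =
          \sum_(k < n) (fun s => complex.Im (F k s)).
  by rewrite fct_sumE; apply/funext => s; rewrite Im_sum.
by split; apply: is_derive_sum => k; case: (HF k).
Qed.

Lemma is_cderiveM F G dF dG : is_cderive F dF -> is_cderive G dG ->
  is_cderive (fun s => F s * G s) (dF * G t + F t * dG).
Proof.
move=> [FRe FIm] [GRe GIm]; rewrite /is_cderive.
have -> : (fun s => complex.Re (F s * G s)) = (fun s =>
    complex.Re (F s) * complex.Re (G s) - complex.Im (F s) * complex.Im (G s)).
  by apply/funext => s; case: (F s); case: (G s).
have -> : (fun s => complex.Im (F s * G s)) = (fun s =>
    complex.Re (F s) * complex.Im (G s) + complex.Im (F s) * complex.Re (G s)).
  by apply/funext => s; case: (F s); case: (G s).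
split.
- apply: (is_derive_eq (is_deriveB (is_deriveM FRe GRe) (is_deriveM FIm GIm))).
  clear; move: (F t) (G t) dF dG => [? ?] [? ?] [? ?] [? ?] /=.
  by rewrite -![_ *: _]/(_ * _); ring.
- apply: (is_derive_eq (is_deriveD (is_deriveM FRe GIm) (is_deriveM FIm GRe))).
  clear; move: (F t) (G t) dF dG => [? ?] [? ?] [? ?] [? ?] /=.
  by rewrite -![_ *: _]/(_ * _); ring.
Qed.

Lemma is_cderiveJ F dF : is_cderive F dF -> is_cderive (fun s => (F s)^*) dF^*.
Proof.
move=> [FRe FIm]; rewrite /is_cderive.
have -> : (fun s => complex.Re (F s)^*) = (fun s => complex.Re (F s)).
  by apply/funext => s; case: (F s).
have -> : (fun s => complex.Im (F s)^*) = (fun s => - complex.Im (F s)).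
  by apply/funext => s; case: (F s).
by case: dF FRe FIm => a b FRe FIm; split => //; apply: (is_deriveN FIm).
Qed.
End ComplexDerive.

Section MatrixDerive.
Variables (R : realType) (m : nat) (t v : 'rV[R]_m).

Definition is_mxderive {p q} (F : 'rV[R]_m -> 'M[R[i]]_(p, q)) (D : 'M[R[i]]_(p, q)) :=
  forall a b, is_cderive t v (fun s => F s a b) (D a b).

Lemma is_mxderive_cst p q (M : 'M[R[i]]_(p, q)) : is_mxderive (fun=> M) 0.
Proof. by move=> a b; rewrite mxE; apply: is_cderive_cst. Qed.

Lemma is_mxderive_sum p q n (F : 'I_n -> 'rV[R]_m -> 'M[R[i]]_(p, q)) D :
  (forall k, is_mxderive (F k) (D k)) ->
  is_mxderive (fun s => \sum_(k < n) F k s) (\sum_(k < n) D k).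
Proof.
move=> HF a b; under [fun s => _]funext do rewrite summxE.
by rewrite summxE; apply: is_cderive_sum => k; apply: HF.
Qed.

Lemma is_mxderiveM p q r (F : 'rV[R]_m -> 'M[R[i]]_(p, q)) (G : 'rV[R]_m -> 'M[R[i]]_(q, r))
    DF DG :
  is_mxderive F DF -> is_mxderive G DG ->
  is_mxderive (fun s => F s *m G s) (DF *m G t + F t *m DG).
Proof.
move=> HF HG a b; under [fun s => _]funext do rewrite mxE.
rewrite !mxE -big_split /=; apply: is_cderive_sum => c.
exact: is_cderiveM.
Qed.

Lemma is_mxderive_adj p q (F : 'rV[R]_m -> 'M[R[i]]_(p, q)) D :
  is_mxderive F D -> is_mxderive (fun s => adj (F s)) (adj D).
Proof.
move=> HF a b.
have -> : (fun s => adj (F s) a b) = (fun s => (F s b a)^*).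
  by apply/funext => s; rewrite !mxE.
by rewrite !mxE; apply: is_cderiveJ.
Qed.
End MatrixDerive.

Lemma is_mxderive_pderiv (R : realType) m p q (F : 'rV[R]_m -> 'M[R[i]]_(p, q)) j t :
  mx_differentiable F -> is_mxderive t (evec R j) F (pderiv F j t).
Proof.
move=> HF a b; rewrite mxE; have [dRe dIm] := HF t a b.
by split; apply/derivableP/diff_derivable.
Qed.

Lemma pderiv_is_mxderive (R : realType) m p q (F : 'rV[R]_m -> 'M[R[i]]_(p, q)) j t D :
  is_mxderive t (evec R j) F D -> pderiv F j t = D.
Proof.
move=> HF; apply/matrixP => a b; rewrite mxE /reF /imF.
by case: (HF a b) => -[_ ->] [_ ->]; case: (D a b).
Qed.

Lemma pderiv_chan_out (R : realType) m d n (Y : 'I_n -> 'rV[R]_m -> 'M[R[i]]_d) rho j t :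
  (forall k, mx_differentiable (Y k)) ->
  pderiv (chan_out Y rho) j t = \sum_(k < n)
    (pderiv (Y k) j t *m rho *m adj (Y k t) + Y k t *m rho *m adj (pderiv (Y k) j t)).
Proof.
move=> HY; apply: pderiv_is_mxderive; apply: is_mxderive_sum => k.
have dY := is_mxderive_pderiv j t (HY k).
have := is_mxderiveM (is_mxderiveM dY (is_mxderive_cst _ _ rho)) (is_mxderive_adj dY).
by rewrite mulmx0 addr0.
Qed.

Section Adjoint.
Variable R : realType.

Lemma adjM p q r (A : 'M[R[i]]_(p, q)) (B : 'M[R[i]]_(q, r)) : adj (A *m B) = adj B *m adj A.
Proof. by rewrite /adj trmx_mul map_mxM. Qed.

Lemma adjD p q (A B : 'M[R[i]]_(p, q)) : adj (A + B) = adj A + adj B.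
Proof. by rewrite /adj linearD map_mxD. Qed.

Lemma adjZ p q (c : R[i]) (A : 'M[R[i]]_(p, q)) : adj (c *: A) = c^* *: adj A.
Proof. by apply/matrixP => a b; rewrite !mxE rmorphM. Qed.

Lemma adjZ_real p q (x : R) (A : 'M[R[i]]_(p, q)) : adj (x%:C *: A) = x%:C *: adj A.
Proof. by rewrite adjZ; congr (_ *: _); apply/eqP; rewrite eq_complex /= oppr0 !eqxx. Qed.

Lemma adjB p q (A B : 'M[R[i]]_(p, q)) : adj (A - B) = adj A - adj B.
Proof. by rewrite adjD -scaleN1r adjZ rmorphN1 scaleN1r. Qed.

Lemma adj_sum p q n (F : 'I_n -> 'M[R[i]]_(p, q)) :
  adj (\sum_(k < n) F k) = \sum_(k < n) adj (F k).
Proof.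
have adj0 : adj (0 : 'M[R[i]]_(p, q)) = 0 by apply/matrixP => a b; rewrite !mxE conjc0.
exact: (big_morph _ (@adjD p q) adj0).
Qed.

Lemma mxtrace_mul_adj_ge0 p q (A : 'M[R[i]]_(p, q)) : 0 <= \tr (A *m adj A).
Proof.
apply: sumr_ge0 => a _; rewrite mxE; apply: sumr_ge0 => b _.
by rewrite !mxE; apply: mulcJ_ge0.
Qed.

Lemma Re_mxtrace_mul_adj_ge0 p q (A : 'M[R[i]]_(p, q)) : 0 <= complex.Re (\tr (A *m adj A)).
Proof. by have := mxtrace_mul_adj_ge0 A; rewrite lecE => /andP[]. Qed.

End Adjoint.

Section TraceAlgebra.
Variables (K : comPzRingType) (d n : nat).
Implicit Types (L P rho : 'M[K]_d) (Y Z Ya Za : 'I_n -> 'M[K]_d).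

Lemma mxtrace_square_expand L P Y Z Ya Za :
  \sum_(l < n) \tr ((L *m Y l - 2 *: Z l) *m P *m (Ya l *m L - 2 *: Za l)) =
    \tr (L *m (\sum_(l < n) Y l *m P *m Ya l) *m L)
  - 2 * \tr (L *m \sum_(l < n) (Z l *m P *m Ya l + Y l *m P *m Za l))
  + 4 * \sum_(l < n) \tr (Z l *m P *m Za l).
Proof.
rewrite mulmx_sumr mulmx_suml !raddf_sum /= !mulr_sumr -!sumrB -big_split /=.
apply: eq_bigr => l _.
rewrite !mulmxBl !mulmxBr -!scalemxAr -!scalemxAl !scalerA !mulmxA.
rewrite mulmxDr !raddfB raddfD /= !mxtraceZ !mulmxA.
rewrite (mxtrace_mulC (Z l *m P *m Ya l) L) !mulmxA.
move: (\tr (L *m Y l *m P *m Ya l *m L)) (\tr (L *m Y l *m P *m Za l)).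
move: (\tr (L *m Z l *m P *m Ya l)) (\tr (Z l *m P *m Za l)) => a b c e.
ring.
Qed.

Lemma mxtrace_mul_anticomm L rho (h : K) :
  \tr (L *m (h *: (rho *m L + L *m rho))) = h * 2 * \tr (L *m rho *m L).
Proof.
rewrite -scalemxAr mxtraceZ mulmxDr raddfD /= (mxtrace_mulC L (L *m rho)) !mulmxA.
by rewrite -mulrA mulr_natl mulr2n.
Qed.

End TraceAlgebra.

Lemma Re_mxtrace_SLD_le (R : realType) d n q (L : 'M[R[i]]_d) (B : 'M[R[i]]_(d, q))
    (Y Z : 'I_n -> 'M[R[i]]_d) :
  let P := B *m adj B in
  let rho := \sum_(l < n) Y l *m P *m adj (Y l) in
  adj L = L ->
  \sum_(l < n) (Z l *m P *m adj (Y l) + Y l *m P *m adj (Z l)) =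
    (2^-1)%:C *: (rho *m L + L *m rho) ->
  complex.Re (\tr (L *m rho *m L)) <= 4 * \sum_(l < n) complex.Re (\tr (Z l *m P *m adj (Z l))).
Proof.
move=> P rho hL hSLD.
have half2 : (2^-1)%:C * 2 = 1 :> R[i].
  by rewrite -(rmorph_nat (real_complex R)) -rmorphM mulVf ?pnatr_eq0.
have square_ge0 l :
    0 <= complex.Re (\tr ((L *m Y l - 2 *: Z l) *m P *m (adj (Y l) *m L - 2 *: adj (Z l)))).
  have -> : adj (Y l) *m L - 2 *: adj (Z l) = adj (L *m Y l - 2 *: Z l).
    by rewrite adjB adjZ adjM hL rmorph_nat.
  by rewrite /P !mulmxA -mulmxA -adjM; apply: Re_mxtrace_mul_adj_ge0.
have := @sumr_ge0 _ _ (index_enum 'I_n) xpredT _ (fun l _ => square_ge0 l).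
rewrite -Re_sum mxtrace_square_expand hSLD mxtrace_mul_anticomm half2 mul1r.
have -> : forall a s : R[i], a - 2 * a + 4 * s = (4 : R)%:C * s - a.
  by move=> a s; rewrite -(rmorph_nat (real_complex R)); ring.
by rewrite raddfB /= Re_realM Re_sum subr_ge0.
Qed.

Definition lincomb (K : pzRingType) m p q (c : 'I_m -> K) (A : 'I_m -> 'M[K]_(p, q)) :
  'M[K]_(p, q) := \sum_(j < m) c j *: A j.

Section LinearCombination.
Variables (K : comPzRingType) (d m : nat) (c : 'I_m -> K).

Lemma mxtrace_lincomb (A B : 'I_m -> 'M[K]_d) (M : 'M[K]_d) :
  \tr (lincomb c A *m M *m lincomb c B) =
  \sum_(j < m) \sum_(k < m) c j * \tr (A j *m M *m B k) * c k.
Proof.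
rewrite !mulmx_suml raddf_sum; apply: eq_bigr => j _.
rewrite mulmx_sumr raddf_sum; apply: eq_bigr => k _.
by rewrite -!scalemxAl -scalemxAr /= !mxtraceZ [c k * _]mulrC mulrA.
Qed.

Lemma anticomm_lincomb n (P rho : 'M[K]_d) (Y Ya : 'I_n -> 'M[K]_d)
    (DY DYa : 'I_n -> 'I_m -> 'M[K]_d) (lam : 'I_m -> 'M[K]_d) (h : K) :
  (forall j, \sum_(l < n) (DY l j *m P *m Ya l + Y l *m P *m DYa l j) =
             h *: (rho *m lam j + lam j *m rho)) ->
  \sum_(l < n) (lincomb c (DY l) *m P *m Ya l + Y l *m P *m lincomb c (DYa l)) =
  h *: (rho *m lincomb c lam + lincomb c lam *m rho).
Proof.
move=> hj; rewrite mulmx_sumr mulmx_suml -big_split scaler_sumr /=.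
under [RHS]eq_bigr => j _ do
  rewrite -scalemxAl -scalemxAr -scalerDr scalerA mulrC -scalerA -hj scaler_sumr.
rewrite exchange_big /=; apply: eq_bigr => l _.
rewrite !mulmx_suml mulmx_sumr -big_split /=; apply: eq_bigr => j _.
by rewrite -!scalemxAl -scalemxAr scalerDr.
Qed.

End LinearCombination.

Section QuadraticForms.
Variables (R : realType) (d m : nat) (v : 'rV[R]_m).
Local Notation vC := (fun j => (v 0 j)%:C).

Lemma adj_lincomb_real (A : 'I_m -> 'M[R[i]]_d) :
  adj (lincomb vC A) = lincomb vC (fun j => adj (A j)).
Proof. by rewrite adj_sum; apply: eq_bigr => j _; rewrite adjZ_real. Qed.

Lemma qform_SLDinfo (lam : 'I_m -> 'M[R[i]]_d) rho :
  qform (SLDinfo lam rho) v = complex.Re (\tr (lincomb vC lam *m rho *m lincomb vC lam)).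
Proof.
rewrite mxtrace_lincomb Re_sum; apply: eq_bigr => j _.
by rewrite Re_sum; apply: eq_bigr => k _; rewrite Re_realMM.
Qed.

Lemma qform_SMbound (Y : 'I_d -> 'rV[R]_m -> 'M[R[i]]_d) rho t :
  let Z l := lincomb vC (fun j => pderiv (Y l) j t) in
  qform (SMbound Y rho t) v = 4 * \sum_(l < d) complex.Re (\tr (Z l *m rho *m adj (Z l))).
Proof.
move=> Z; have Z_expand l : complex.Re (\tr (Z l *m rho *m adj (Z l))) =
    \sum_(j < m) \sum_(k < m) v 0 j *
      complex.Re (\tr (pderiv (Y l) j t *m rho *m adj (pderiv (Y l) k t))) * v 0 k.
  rewrite adj_lincomb_real mxtrace_lincomb Re_sum; apply: eq_bigr => j _.
  by rewrite Re_sum; apply: eq_bigr => k _; rewrite Re_realMM.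
rewrite (eq_bigr _ (fun l _ => Z_expand l)) /qform /SMbound.
rewrite [in RHS]exchange_big /= [in RHS]mulr_sumr; apply: eq_bigr => j _.
rewrite [in RHS]exchange_big /= [in RHS]mulr_sumr; apply: eq_bigr => k _.
rewrite !mulr_sumr mulr_suml; apply: eq_bigr => l _.
by rewrite mulrCA !mulrA.
Qed.

End QuadraticForms.

Theorem lemma7 (R : realType) (d m r : nat)
  (E : 'I_r -> 'rV[R]_m -> CM R d)          (* original Kraus operators *)
  (Y : 'I_d -> 'rV[R]_m -> CM R d)          (* canonical Kraus operators Upsilon_k *)
  (psi0 : CV R d)                           (* input pure state *)
  (p : 'I_d -> 'rV[R]_m -> R)
  (w : 'I_d -> 'rV[R]_m -> CV R d) :
  (* E is a differentiable Kraus representation *)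
  (forall k, mx_differentiable (E k)) ->
  (forall t, \sum_(k < r) adj (E k t) *m E k t = 1%:M) ->
  (* Upsilon is a differentiable Kraus representation of the same channel *)
  (forall k, mx_differentiable (Y k)) ->
  (forall t, \sum_(k < d) adj (Y k t) *m Y k t = 1%:M) ->
  (forall t (X : CM R d),
      \sum_(k < r) (E k t *m X *m adj (E k t)) = \sum_(k < d) (Y k t *m X *m adj (Y k t))) ->
  (* normalized pure input state *)
  adj psi0 *m psi0 = 1%:M ->
  (* canonical property *)
  (forall t j k, \tr (Y k t *m pure_st psi0 *m adj (Y j t)) = (if j == k then (p k t)%:C else 0)) ->
  (* differentiable orthonormal basis w_k with w_k = p_k^{-1/2} Upsilon_k psi0 when p_k > 0 *)
  (forall k, mx_differentiable (w k)) ->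
  (forall t j k, adj (w j t) *m w k t = (if j == k then 1 else 0)%:M) ->
  (forall t k, 0 < p k t -> w k t = ((Num.sqrt (p k t))^-1)%:C *: (Y k t *m psi0)) ->
  (* conclusion: H(theta) <= C_Upsilon(theta) for every choice of SLDs *)
  forall (t : 'rV[R]_m) (lam : 'I_m -> CM R d),
    (forall j, selfadj (lam j)) ->
    (forall j, pderiv (chan_out Y (pure_st psi0)) j t =
               (2^-1)%:C *: (chan_out Y (pure_st psi0) t *m lam j + lam j *m chan_out Y (pure_st psi0) t)) ->
    forall v : 'rV[R]_m,
      qform (SLDinfo lam (chan_out Y (pure_st psi0) t)) v <= qform (SMbound Y (pure_st psi0) t) v.
Proof.
move=> _ _ dY _ _ _ _ _ _ _ t lam lam_selfadj lam_SLD v.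
set rho := chan_out Y (pure_st psi0) t.
set vC := fun j => (v 0 j)%:C.
set Lam := lincomb vC lam.
pose Z l := lincomb vC (fun j => pderiv (Y l) j t).
have Lam_selfadj : adj Lam = Lam.
  by rewrite adj_lincomb_real; congr lincomb; apply/funext => j; apply: lam_selfadj.
have Lam_SLD : \sum_(l < d) (Z l *m pure_st psi0 *m adj (Y l t) +
                              Y l t *m pure_st psi0 *m adj (Z l)) =
               (2^-1)%:C *: (rho *m Lam + Lam *m rho).
  under eq_bigr => l _ do rewrite adj_lincomb_real.
  by apply: anticomm_lincomb => j; rewrite -pderiv_chan_out // lam_SLD.
rewrite qform_SLDinfo qform_SMbound.
exact: (Re_mxtrace_SLD_le (B := psi0) Lam_selfadj Lam_SLD).
Qed.
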